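(* Let $Q$ be an admissible orientation of $\tilde{A}_n$ and $I$ a two-sided algebra ideal of $\Bbbk Q$. Then exactly one of the following holds: (a) $I$ is a linearized semigroup ideal; (b) $k=1$ and $I=\Bbbk(\omega+a\upsilon)$, where $\omega$ and $\upsilon$ are the two different maximal paths of $Q$ and $a\in\Bbbk\setminus\{0\}$.
   Context: $\Bbbk$ is an algebraically closed field. An admissible orientation of $\tilde A_n$ is a finite quiver $Q$ with $n$ vertices whose underlying undirected graph is a cycle, having no oriented cycle and at least one source; $k\ge1$ denotes the number of sources (= number of sinks). Paths include trivial paths $\varepsilon_x$; products of paths in $\Bbbk Q$ are concatenations when defined and $0$ otherwise. $\omega\le_J\upsilon$ means $\upsilon=\alpha\omega\beta$ for paths $\alpha,\beta$; maximal paths are the $\le_J$-maximal paths. A linearized semigroup ideal is an ideal of $\Bbbk Q$ spanned by a set $X$ of paths such that $\alpha\omega\beta\in X$ whenever $\omega\in X$ and $\alpha\omega\beta$ is a defined path. *)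

From HB Require Import structures.
From mathcomp Require Import all_boot all_order all_algebra.
Set Implicit Arguments. Unset Strict Implicit. Unset Printing Implicit Defensive.
Import GRing.Theory.
Local Open Scope ring_scope.

(* A quiver whose underlying graph is a cycle with n vertices, up to
   isomorphism: vertices 'I_n, arrows 'I_n; arrow a joins a and ordS a
   (= a+1 mod n) and is oriented a -> a+1 if o a, and a+1 -> a otherwise. *)
Section CycleQuiver.
Variables (n : nat) (o : 'I_n -> bool).

Definition asrc (a : 'I_n) : 'I_n := if o a then a else ordS a.
Definition atgt (a : 'I_n) : 'I_n := if o a then ordS a else a.

(* A (raw) path is a starting vertex with a sequence of arrows,
   written left to right in order of traversal. *)
Definition rpath := ('I_n * seq 'I_n)%type.

Fixpoint validp (x : 'I_n) (s : seq 'I_n) : bool :=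
  if s is a :: s' then (asrc a == x) && validp (atgt a) s' else true.

Fixpoint endp (x : 'I_n) (s : seq 'I_n) : 'I_n :=
  if s is a :: s' then endp (atgt a) s' else x.

Definition is_path (p : rpath) : bool := validp p.1 p.2.
Definition psrc (p : rpath) : 'I_n := p.1.
Definition ptgt (p : rpath) : 'I_n := endp p.1 p.2.

(* concatenation (only meaningful when ptgt p = psrc q) *)
Definition pcat (p q : rpath) : rpath := (p.1, p.2 ++ q.2).

Definition acyclic : Prop :=
  forall p : rpath, is_path p -> p.2 != [::] -> ptgt p != psrc p.

Definition is_source (x : 'I_n) : bool := [forall a : 'I_n, atgt a != x].
Definition num_sources : nat := #|[set x : 'I_n | is_source x]|.

Definition leJ (w v : rpath) : Prop :=
  exists al be : rpath, [/\ is_path al, is_path be, ptgt al = psrc w,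
    ptgt w = psrc be & v = pcat (pcat al w) be].

Definition maximal_path (w : rpath) : Prop :=
  is_path w /\ forall v, is_path v -> leJ w v -> v = w.

(* The path algebra kQ: K-valued functions on paths with finite support,
   supported on genuine paths; a path p is identified with its indicator. *)
Variable K : fieldType.

Definition in_kQ (f : rpath -> K) : Prop :=
  (exists s : seq rpath, forall p, p \notin s -> f p = 0) /\
  (forall p, f p != 0 -> is_path p).

Definition kQzero : rpath -> K := fun _ => 0.
Definition kQadd (f g : rpath -> K) : rpath -> K := fun p => f p + g p.
Definition kQscale (c : K) (f : rpath -> K) : rpath -> K := fun p => c * f p.
(* product extending bilinearly: path p * path q = pq if ptgt p = psrc q,
   and 0 otherwise *)
Definition kQmul (f g : rpath -> K) : rpath -> K := fun r =>
  if is_path r then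
    \sum_(i < (size r.2).+1)
      f (r.1, take i r.2) * g (endp r.1 (take i r.2), drop i r.2)
  else 0.

Definition kQpath (p : rpath) : rpath -> K := fun q => (q == p)%:R.

Definition is_ideal (I : (rpath -> K) -> Prop) : Prop :=
  [/\ (forall f, I f -> in_kQ f), I kQzero,
      (forall f g, I f -> I g -> I (kQadd f g)),
      (forall c f, I f -> I (kQscale c f)) &
      (forall f g, in_kQ g -> I f -> I (kQmul g f) /\ I (kQmul f g))].

Definition lin_span (X : rpath -> Prop) (f : rpath -> K) : Prop :=
  in_kQ f /\ forall p, f p != 0 -> X p.

Definition semigroup_ideal_set (X : rpath -> Prop) : Prop :=
  (forall p, X p -> is_path p) /\
  forall al w be, is_path al -> is_path w -> is_path be ->
    ptgt al = psrc w -> ptgt w = psrc be -> X w -> X (pcat (pcat al w) be).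

Definition linearized_semigroup_ideal (I : (rpath -> K) -> Prop) : Prop :=
  exists X, semigroup_ideal_set X /\ forall f, I f <-> lin_span X f.

End CycleQuiver.

From mathcomp Require Import all_boot all_order all_algebra.
From mathcomp Require Import zify ring.
From Stdlib Require Import FunctionalExtensionality Classical.
Set Implicit Arguments. Unset Strict Implicit. Unset Printing Implicit Defensive.
Import GRing.Theory.

(* On a cycle a path never turns back and, as Q has no oriented cycle, it
   runs less than once around. Hence two distinct paths with the same ends
   are the two arcs between a vertex x and a vertex y; then x is the only
   source, y the only sink, and the arcs are the maximal paths omega and
   upsilon, which dominate every path for <=_J.
   If every path occurring in an element of I lies in I, then I is spanned by
   the paths it contains. Otherwise some f in I involves a path p outside I
   together with a distinct path parallel to p, and the corner e_x f e_y is
   b omega + c upsilon with b, c nonzero. Then neither omega nor upsilon lies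
   in I, so no path lies in I, every element of I is a combination of omega
   and upsilon, and it is proportional to omega + (c/b) upsilon. *)

Section CyclicShift.
Variable n : nat.
Local Notation N := n.+1.
Implicit Types x y : 'I_N.

Definition shift x (t : nat) : 'I_N := Ordinal (ltn_pmod (x + t) (ltn0Sn n)).

Lemma shift0 x : shift x 0 = x.
Proof. by apply: val_inj; rewrite /= addn0 modn_small. Qed.

Lemma shiftD x t u : shift (shift x t) u = shift x (t + u).
Proof. by apply: val_inj; rewrite /= modnDml addnA. Qed.

Lemma eq_shift x a b : (shift x a == shift x b) = (a == b %[mod N]).
Proof.
apply/eqP/idP => [/(congr1 val) /= /eqP | /eqP H]; first by rewrite eqn_modDl.
by apply: val_inj => /=; apply/eqP; rewrite eqn_modDl H.
Qed.

Lemma shift_mod x a b : a = b %[mod N] -> shift x a = shift x b.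
Proof. by move=> H; apply/eqP; rewrite eq_shift H. Qed.

Lemma shift_inj x a b : a < N -> b < N -> shift x a = shift x b -> a = b.
Proof. by move=> ha hb /eqP; rewrite eq_shift !modn_small // => /eqP. Qed.

Lemma shiftN x : shift x N = x.
Proof. by apply: val_inj; rewrite /= modnDr modn_small. Qed.

Lemma shift_onto x y : exists2 i, i < N & y = shift x i.
Proof.
exists ((y + (N - x)) %% N); first exact: ltn_pmod.
apply: val_inj => /=; rewrite modnDmr addnA [x + y]addnC -addnA subnKC; last exact: ltnW.
by rewrite modnDr modn_small.
Qed.

Lemma ordS_shift x t : ordS (shift x t) = shift x t.+1.
Proof. by apply: val_inj; rewrite /= -addn1 modnDml addn1 addnS. Qed.

Lemma ord_pred_shift x t : ord_pred (shift x t) = shift x (t + n).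
Proof. by apply: val_inj; rewrite /= addnS /= modnDml addnA. Qed.

(* [n] is [-1] modulo [n.+1], so [shift x (n * j)] is [x - j]. *)
Lemma modn_mul_pred a b : a + b = 0 %[mod N] -> n * a = b %[mod N].
Proof.
move=> H; apply/eqP; rewrite -(eqn_modDr a) [b + a]addnC H.
by rewrite addnC -mulSn mulnC modnMl mod0n.
Qed.

Lemma shift_mul_pred x k : k < N -> shift x (n * (n - k).+1) = shift x k.
Proof.
move=> kN; apply: shift_mod; apply: modn_mul_pred.
have -> : (n - k).+1 + k = N by lia.
by rewrite modnn mod0n.
Qed.

Lemma shift_mul_pred_inj x a b : a < N -> b < N ->
  shift x (n * a) = shift x (n * b) -> a = b.
Proof.
move=> ha hb /eqP; rewrite eq_shift => /eqP E.
have : n * a + (a + b) = n * b + (a + b) %[mod N] by rewrite -modnDml E modnDml.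
rewrite addnA -mulSnr [a + b]addnC addnA -mulSnr mulnC [N * b]mulnC.
by rewrite modnMDl modnMDl !modn_small // => ->.
Qed.

End CyclicShift.

Section CyclePaths.
Variable n : nat.
Local Notation N := n.+1.
Variable o : 'I_N -> bool.
Implicit Types x y z : 'I_N.

(* The arrows met by a walk of length [l] from [x] going clockwise
   ([x, x+1, ...]) and counterclockwise ([x-1, x-2, ...]). *)
Definition fwd_run x l := [seq shift x j | j <- iota 0 l].
Definition bwd_run x l := [seq shift x (n * j.+1) | j <- iota 0 l].

Lemma validp_cat x s1 s2 :
  validp o x (s1 ++ s2) = validp o x s1 && validp o (endp o x s1) s2.
Proof. by elim: s1 x => //= a s IH x; rewrite IH andbA. Qed.

Lemma endp_cat x s1 s2 : endp o x (s1 ++ s2) = endp o (endp o x s1) s2.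
Proof. by elim: s1 x => //= a s IH x. Qed.

Lemma fwd_runS x l : fwd_run x l.+1 = x :: fwd_run (shift x 1) l.
Proof.
rewrite /fwd_run /= shift0 (iotaDl 1 0) -map_comp.
by congr (_ :: _); apply: eq_map => j /=; rewrite shiftD.
Qed.

Lemma bwd_runS x l : bwd_run x l.+1 = shift x n :: bwd_run (shift x n) l.
Proof.
rewrite /bwd_run /= muln1 (iotaDl 1 0) -map_comp.
by congr (_ :: _); apply: eq_map => j /=; rewrite shiftD mulnS.
Qed.

Lemma fwd_run_shift x i l : fwd_run (shift x i) l = [seq shift x k | k <- iota i l].
Proof.
rewrite -[i in iota i]addn0 iotaDl /fwd_run -map_comp.
by apply: eq_map => j /=; rewrite shiftD.
Qed.

Lemma bwd_run_shift x i l :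
  bwd_run (shift x (n * i)) l = [seq shift x (n * k.+1) | k <- iota i l].
Proof.
rewrite -[i in iota i]addn0 iotaDl /bwd_run -map_comp.
by apply: eq_map => j /=; rewrite shiftD -mulnDr addnS.
Qed.

Lemma mem_fwd_run x l k : k < l -> shift x k \in fwd_run x l.
Proof. by move=> kl; apply: map_f; rewrite mem_iota. Qed.

Lemma mem_bwd_run x l k : k < l -> shift x (n * k.+1) \in bwd_run x l.
Proof. by move=> kl; apply: (map_f (fun j => shift x (n * j.+1))); rewrite mem_iota. Qed.

Lemma validp_fwd_run x l : all o (fwd_run x l) ->
  validp o x (fwd_run x l) /\ endp o x (fwd_run x l) = shift x l.
Proof.
elim: l x => [|l IH] x; first by rewrite shift0.
rewrite fwd_runS /= /asrc /atgt => /andP [-> /IH]; rewrite -[x in ordS x]shift0 ordS_shift.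
by case=> -> ->; rewrite eqxx shiftD.
Qed.

Lemma validp_bwd_run x l : all (fun a => ~~ o a) (bwd_run x l) ->
  validp o x (bwd_run x l) /\ endp o x (bwd_run x l) = shift x (n * l).
Proof.
elim: l x => [|l IH] x; first by rewrite muln0 shift0.
rewrite bwd_runS /= /asrc /atgt => /andP [/negbTE -> /IH].
by rewrite ordS_shift shiftN eqxx shiftD mulnS; case=> -> ->.
Qed.

(* A path never changes direction: two consecutive arrows of opposite
   orientations would meet head to head or tail to tail. *)
Lemma validp_run x s : validp o x s ->
  [/\ s = fwd_run x (size s), all o s & endp o x s = shift x (size s)] \/
  [/\ s = bwd_run x (size s), all (fun a => ~~ o a) s &
      endp o x s = shift x (n * size s)].
Proof.
elim: s x => [|a s IH] x /=; first by left; rewrite shift0.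
rewrite /asrc /atgt; case oa: (o a) => /andP [/eqP ax vs] /=.
  subst a; have hx1 : ordS x = shift x 1 by rewrite -[x in ordS x]shift0 ordS_shift.
  rewrite hx1 in vs *.
  case: (IH _ vs) => [[e1 e2 e3]|[e1 e2 e3]].
    by left; rewrite fwd_runS -e1 e2 e3 shiftD.
  case: s {IH vs} e1 e2 e3 => [|b s] e1 e2 e3.
    by left; rewrite /= fwd_runS /fwd_run /=.
  exfalso; move: e1 e2 => /=; rewrite bwd_runS => -[-> _] /= /andP [].
  by rewrite shiftD add1n shiftN oa.
have ax' : a = shift x n.
  by rewrite -(ordSK a) ax -[x in ord_pred x]shift0 ord_pred_shift.
subst a; case: (IH _ vs) => [[e1 e2 e3]|[e1 e2 e3]]; last first.
  by right; rewrite bwd_runS -e1 e2 e3 shiftD mulnS.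
case: s {IH vs} e1 e2 e3 => [|b s] e1 e2 e3.
  by right; rewrite /= muln1 bwd_runS /bwd_run /=.
exfalso; move: e1 e2; rewrite [size _]/= fwd_runS => -[-> _] /= /andP [].
by rewrite oa.
Qed.

Lemma size_validp_acyclic x s : acyclic o -> validp o x s -> size s < N.
Proof.
move=> Hac vs; rewrite ltnNge; apply/negP => hN.
move: vs; rewrite -(cat_take_drop N s) validp_cat => /andP [vt _].
have st : size (take N s) = N by rewrite size_takel.
have ne : take N s != [::] by rewrite -size_eq0 st.
apply/negP: (Hac (x, take N s) vt ne); rewrite negbK /ptgt /psrc /=.
case: (validp_run vt) => -[_ _ ->]; rewrite st; first by rewrite shiftN.
by rewrite (@shift_mod _ _ _ 0) ?shift0 // modnMl mod0n.
Qed.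

Lemma last_arrow y s : s != [::] -> exists2 a, a \in s & atgt o a = endp o y s.
Proof.
elim: s y => [//|a s IH] y _ /=.
case: s IH => [|b s] IH; first by exists a; rewrite ?mem_seq1.
have [c cs ec] := IH (atgt o a) isT; exists c => //.
by rewrite in_cons cs orbT.
Qed.

Lemma leJ_infix x s i l (r : rpath N) : validp o x s ->
  r = (endp o x (take i s), take l (drop i s)) -> leJ o r (x, s).
Proof.
move=> vs ->.
exists (x, take i s), (endp o x (take (i + l) s), drop (i + l) s).
have vsplit j : validp o x (take j s) && validp o (endp o x (take j s)) (drop j s).
  by rewrite -validp_cat cat_take_drop.
have /andP [v1 _] := vsplit i; have /andP [_ v2] := vsplit (i + l).
split => //; first by rewrite /ptgt /= takeD endp_cat.
by rewrite /pcat /= -takeD cat_take_drop.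
Qed.

(* The arrows [x, ..., x+m-1] point clockwise and the others
   counterclockwise: [x] is the only source and [x+m] the only sink. *)
Definition bipolar x m := forall k, k < N -> o (shift x k) = (k < m).

Lemma bipolar_uniq x m1 m2 : m1 <= N -> m2 <= N ->
  bipolar x m1 -> bipolar x m2 -> m1 = m2.
Proof.
move=> h1 h2 c1 c2; case: (ltngtP m1 m2) => // H; exfalso.
  by move: (c2 m1 (leq_trans H h2)); rewrite c1 ?ltnn ?H // (leq_trans H h2).
by move: (c1 m2 (leq_trans H h1)); rewrite c2 ?ltnn ?H // (leq_trans H h1).
Qed.

Lemma fwd_bwd_meet x l1 l2 : l1 < N -> l2 < N -> all o (fwd_run x l1) ->
  all (fun a => ~~ o a) (bwd_run x l2) -> shift x l1 = shift x (n * l2) ->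
  fwd_run x l1 != bwd_run x l2 ->
  [/\ 0 < l1, l2 = N - l1 & bipolar x l1].
Proof.
move=> h1 h2 a1 a2 /eqP; rewrite eq_shift => /eqP E ne.
have /dvdnP [q Dq] : N %| l1 + l2 by rewrite /dvdn -modnDml E modnDml -mulSnr modnMr.
have [l_0|l_N] : l1 + l2 = 0 \/ l1 + l2 = N by case: q Dq => [|[|q]]; nia.
  by move: ne; have [-> ->] : l1 = 0 /\ l2 = 0 by lia.
split; [lia | lia | move=> k kN].
case: ltnP => kl; first exact: (allP a1 _ (mem_fwd_run x kl)).
apply/negbTE; rewrite -shift_mul_pred //; apply: (allP a2); apply: mem_bwd_run; lia.
Qed.

Definition omega x m : rpath N := (x, fwd_run x m).
Definition upsilon x m : rpath N := (x, bwd_run x (N - m)).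

Lemma parallel_paths (p q : rpath N) : acyclic o -> is_path o p -> is_path o q ->
  p != q -> psrc p = psrc q -> ptgt o p = ptgt o q ->
  exists2 m, [/\ 0 < m, m < N & bipolar (psrc p) m] &
   (p = omega (psrc p) m /\ q = upsilon (psrc p) m) \/
   (p = upsilon (psrc p) m /\ q = omega (psrc p) m).
Proof.
case: p q => [x s1] [x' s2] Hac; rewrite /is_path /psrc /ptgt /= => v1 v2 ne ex E.
subst x'; have {}ne : s1 != s2 by apply: contra ne => /eqP ->.
have b1 := size_validp_acyclic Hac v1; have b2 := size_validp_acyclic Hac v2.
rewrite /omega /upsilon.
case: (validp_run v1) => -[e1 a1 n1]; case: (validp_run v2) => -[e2 a2 n2].
- exfalso; move: E; rewrite n1 n2 => /shift_inj -/(_ b1 b2) H.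
  by move: ne; rewrite e1 e2 H eqxx.
- have := @fwd_bwd_meet x (size s1) (size s2) b1 b2.
  rewrite -e1 -e2 -n1 -n2 => /(_ a1 a2 E ne) [p1 p2 ch].
  by exists (size s1) => //; left; rewrite -p2 -e1 -e2.
- have := @fwd_bwd_meet x (size s2) (size s1) b2 b1.
  rewrite -e1 -e2 -n1 -n2 eq_sym => /(_ a2 a1 (esym E) ne) [p1 p2 ch].
  by exists (size s2) => //; right; rewrite -p2 -e1 -e2.
- exfalso; move: E; rewrite n1 n2 => /shift_mul_pred_inj -/(_ b1 b2) H.
  by move: ne; rewrite e1 e2 H eqxx.
Qed.

End CyclePaths.

Section Bipolar.
Variable n : nat.
Local Notation N := n.+1.
Variable o : 'I_N -> bool.
Variables (x : 'I_N) (m : nat).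
Hypotheses (m_gt0 : 0 < m) (m_ltN : m < N) (bip : bipolar o x m).

Local Notation omega := (omega x m).
Local Notation upsilon := (upsilon x m).

Lemma o_shift_mul_pred k : k < N -> o (shift x (n * k.+1)) = (N - m <= k).
Proof.
move=> kN; have -> : n * k.+1 = n * (n - (n - k)).+1 by congr (_ * _.+1); lia.
by rewrite shift_mul_pred ?bip; [apply/idP/idP; lia | lia | lia].
Qed.

Lemma all_fwd_run i : i <= m -> all o (fwd_run x i).
Proof.
move=> im; apply/allP => a /mapP [k]; rewrite mem_iota => /andP [_ km] ->.
by rewrite bip; lia.
Qed.

Lemma all_bwd_run i : i <= N - m -> all (fun a => ~~ o a) (bwd_run x i).
Proof.
move=> im; apply/allP => a /mapP [k]; rewrite mem_iota => /andP [_ km] ->.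
rewrite o_shift_mul_pred; lia.
Qed.

Lemma omega_path : is_path o omega /\ ptgt o omega = shift x m.
Proof. exact/validp_fwd_run/all_fwd_run. Qed.

Lemma upsilon_path : is_path o upsilon /\ ptgt o upsilon = shift x m.
Proof.
rewrite /ptgt /=; have [vu ->] := validp_bwd_run (all_bwd_run (leqnn (N - m))); split => //.
by apply: shift_mod; apply: modn_mul_pred; rewrite subnK ?modnn ?mod0n //; lia.
Qed.

Lemma omega_neq_upsilon : omega != upsilon.
Proof.
apply/eqP => -[e]; have : x \in fwd_run x m by rewrite -{1}[x]shift0 mem_fwd_run.
by rewrite e => /(allP (all_bwd_run (leqnn _))); rewrite -{1}[x]shift0 bip // m_gt0.
Qed.

Lemma bipolar_source : is_source o x.
Proof.
apply/forallP => a; rewrite /atgt; case oa: (o a); apply/eqP => e; move: oa.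
  rewrite -(ordSK a) e -{1}[x]shift0 ord_pred_shift add0n bip //.
  by rewrite ltnNge -ltnS m_ltN.
by rewrite e -{1}[x]shift0 bip // m_gt0.
Qed.

Lemma bipolar_source_uniq y : is_source o y -> y = x.
Proof.
have [[|i] iN ->] := shift_onto x y; first by rewrite shift0.
move=> /forallP S; exfalso; case oi1: (o (shift x i.+1)).
  have oi : o (shift x i) by rewrite bip; [move: oi1; rewrite bip //; lia | lia].
  by move: (S (shift x i)); rewrite /atgt oi ordS_shift eqxx.
by move: (S (shift x i.+1)); rewrite /atgt oi1 eqxx.
Qed.

Lemma num_sources_bipolar : num_sources o = 1%N.
Proof.
rewrite /num_sources (_ : [set y | is_source o y] = [set x]) ?cards1 //.
apply/setP => y; rewrite !inE; apply/idP/eqP => [/bipolar_source_uniq //|->].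
exact: bipolar_source.
Qed.

Lemma bipolar_sink a : asrc o a != shift x m.
Proof.
rewrite /asrc; case oa: (o a); apply/eqP => e; move: oa.
  by rewrite e bip // ltnn.
rewrite -(ordSK a) e ord_pred_shift.
have -> : shift x (m + n) = shift x m.-1.
  by apply: shift_mod; rewrite -[m in m + n](prednK m_gt0) addSn -addnS modnDr.
by rewrite bip; lia.
Qed.

Lemma maximal_source_sink (w : rpath N) : is_path o w -> psrc w = x ->
  ptgt o w = shift x m -> maximal_path o w.
Proof.
move=> pw sw tw; split => // v pv [[a1 [|a t]] [[b1 [|b t']] [pal pbe e1 e2 ->]]].
- by rewrite /pcat /= cats0; move: e1 sw; rewrite /ptgt /= => ->; case: w {pw tw e2}.
- move: pbe; rewrite /is_path /= => /andP [/eqP sb _].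
  by move: (bipolar_sink b); rewrite sb -tw e2 eqxx.
- have [c _ ec] := last_arrow o a1 (isT : a :: t != [::]).
  by move: bipolar_source => /forallP /(_ c); rewrite ec -sw -e1 eqxx.
- have [c _ ec] := last_arrow o a1 (isT : a :: t != [::]).
  by move: bipolar_source => /forallP /(_ c); rewrite ec -sw -e1 eqxx.
Qed.

Lemma infix_fwd_run i l : i + l <= m ->
  take l (drop i (fwd_run x m)) = [seq shift x k | k <- iota i l].
Proof.
move=> ilm; rewrite /fwd_run -map_drop -map_take drop_iota take_iota.
by congr (map _ (iota _ _)); lia.
Qed.

Lemma infix_bwd_run i l : i + l <= N - m ->
  take l (drop i (bwd_run x (N - m))) = [seq shift x (n * k.+1) | k <- iota i l].
Proof.
move=> ilm; rewrite /bwd_run -map_drop -map_take drop_iota take_iota.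
by congr (map _ (iota _ _)); lia.
Qed.

Lemma endp_take_fwd_run i : i <= m -> endp o x (take i (fwd_run x m)) = shift x i.
Proof.
move=> im; rewrite -[fwd_run x m]drop0 infix_fwd_run //.
exact: (validp_fwd_run (all_fwd_run im)).2.
Qed.

Lemma endp_take_bwd_run i : i <= N - m ->
  endp o x (take i (bwd_run x (N - m))) = shift x (n * i).
Proof.
move=> im; rewrite -[bwd_run x _]drop0 infix_bwd_run //.
exact: (validp_bwd_run (all_bwd_run im)).2.
Qed.

Lemma leJ_omega_fwd_run i l : i + l <= m -> leJ o (shift x i, fwd_run (shift x i) l) omega.
Proof.
move=> ilm; apply: (@leJ_infix n o x (fwd_run x m) i l _ omega_path.1).
by rewrite infix_fwd_run // endp_take_fwd_run ?fwd_run_shift //; lia.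
Qed.

Lemma leJ_upsilon_bwd_run j l : j + l <= N - m ->
  leJ o (shift x (n * j), bwd_run (shift x (n * j)) l) upsilon.
Proof.
move=> jlm; apply: (@leJ_infix n o x (bwd_run x (N - m)) j l _ upsilon_path.1).
by rewrite infix_bwd_run // endp_take_bwd_run ?bwd_run_shift //; lia.
Qed.

Lemma all_fwd_run_shift i l : i < N -> 0 < l -> all o (fwd_run (shift x i) l) ->
  i + l <= m.
Proof.
move=> iN l_gt0; rewrite fwd_run_shift => /allP a.
have im : i < m by rewrite -bip // a // map_f // mem_iota leqnn -{1}[i]addn0 ltn_add2l.
rewrite leqNgt; apply/negP => lt_m.
have : shift x m \in [seq shift x k | k <- iota i l] by rewrite map_f // mem_iota; lia.
by move/a; rewrite bip // ltnn.
Qed.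

Lemma all_bwd_run_shift j l : j < N -> 0 < l ->
  all (fun a => ~~ o a) (bwd_run (shift x (n * j)) l) -> j + l <= N - m.
Proof.
move=> jN l_gt0; rewrite bwd_run_shift => /allP a.
have ob k : j <= k < j + l -> ~~ o (shift x (n * k.+1)).
  by move=> jkl; apply: a; rewrite (map_f (fun k => shift x (n * k.+1))) // mem_iota.
have jm : j < N - m.
  rewrite ltnNge; apply/negP => mj.
  suff /ob : j <= j < j + l by rewrite o_shift_mul_pred // mj.
  lia.
rewrite leqNgt; apply/negP => lt_m.
suff /ob : j <= N - m < j + l by rewrite o_shift_mul_pred ?leqnn //; lia.
lia.
Qed.

Lemma leJ_omega_upsilon (r : rpath N) : is_path o r -> leJ o r omega \/ leJ o r upsilon.
Proof.
case: r => z s; have [i iN ->] := shift_onto x z; rewrite /is_path /= => vs.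
pose j := (N - i) %% N; have jN : j < N by rewrite ltn_pmod.
have Hj : shift x (n * j) = shift x i.
  by apply/shift_mod/modn_mul_pred; rewrite modnDml subnK ?modnn // ltnW.
have [-> | s_ne] := eqVneq s [::].
  have [im|mi] := leqP i m; [left | right].
    by apply: (leJ_omega_fwd_run (l := 0)); rewrite addn0.
  by rewrite -Hj; apply: (leJ_upsilon_bwd_run (l := 0)); rewrite addn0 /j modn_small; lia.
have l_gt0 : 0 < size s by rewrite lt0n size_eq0.
case: (validp_run vs) => -[e a _]; rewrite e; [left | right].
  by apply: leJ_omega_fwd_run; apply: all_fwd_run_shift; rewrite -?e.
by rewrite -Hj; apply: leJ_upsilon_bwd_run; apply: all_bwd_run_shift; rewrite // Hj -e.
Qed.

End Bipolar.

Section BipolarAcyclic.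
Variable n : nat.
Local Notation N := n.+1.
Variables (o : 'I_N -> bool) (x : 'I_N) (m : nat).
Hypotheses (m_gt0 : 0 < m) (m_ltN : m < N) (bip : bipolar o x m) (acyc : acyclic o).

Lemma parallel_bipolar (t t' : rpath N) : is_path o t -> is_path o t' -> t != t' ->
  psrc t = psrc t' -> ptgt o t = ptgt o t' -> t = omega x m \/ t = upsilon x m.
Proof.
move=> pt pt' ne e E; have [m1 [h0 hN c1] HH] := parallel_paths acyc pt pt' ne e E.
have ex : psrc t = x := bipolar_source_uniq m_gt0 m_ltN bip (bipolar_source h0 hN c1).
rewrite ex in c1 HH; have em : m1 = m by apply: (bipolar_uniq _ _ c1 bip); lia.
by subst m1; case: HH => -[-> _]; [left|right].
Qed.

Lemma paths_source_sink (t : rpath N) : is_path o t -> psrc t = x ->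
  ptgt o t = shift x m -> t = omega x m \/ t = upsilon x m.
Proof.
move=> pt st tt; have [->|ne] := eqVneq t (omega x m); first by left.
have [pw tw] := omega_path m_gt0 m_ltN bip.
by apply: parallel_bipolar pt pw ne st _; rewrite tt tw.
Qed.

End BipolarAcyclic.

Section PathAlgebra.
Local Open Scope ring_scope.
Variable n : nat.
Local Notation N := n.+1.
Variables (o : 'I_N -> bool) (K : fieldType).
Implicit Types (p q r : rpath N) (f g : rpath N -> K).

Lemma in_kQ_path p : is_path o p -> in_kQ o (kQpath K p).
Proof.
move=> pp; split; first by exists [:: p] => q; rewrite /kQpath mem_seq1 => /negbTE ->.
move=> q; rewrite /kQpath; have [-> //|_] := eqVneq q p.
by rewrite mulr0n eqxx.
Qed.

Lemma kQmul_path p q : is_path o p -> is_path o q -> ptgt o p = psrc q ->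
  kQmul o (kQpath K p) (kQpath K q) = kQpath K (pcat p q).
Proof.
case: p q => [x1 s1] [x2 s2]; rewrite /is_path /ptgt /psrc /= => v1 v2 e.
apply: functional_extensionality => r; rewrite /kQmul /kQpath.
have [->|ne] := eqVneq r (pcat (x1, s1) (x2, s2)).
  rewrite /pcat /is_path /= validp_cat v1 e v2 /=.
  have hs : (size s1 < (size (s1 ++ s2)).+1)%N by rewrite size_cat ltnS leq_addr.
  rewrite (bigD1 (Ordinal hs)) //= take_size_cat // drop_size_cat //.
  rewrite e !eqxx mulr1 big1 ?addr0 // => i ne_i.
  case: eqP => [[ti]|]; last by rewrite mul0r.
  exfalso; move: ne_i; have := size_takel (ltn_ord i); rewrite ti => si.
  by apply/negP; rewrite negbK; apply/eqP; apply: val_inj.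
rewrite mulr0n; case: ifP => // pr; rewrite big1 // => i _.
case: eqP => [E1|]; last by rewrite mul0r.
case: eqP => [E2|]; last by rewrite mulr0.
exfalso; move/eqP: ne; apply; case: E1 => E1a E1b; case: E2 => _ E2b.
by rewrite /pcat /= -E1a -E1b -E2b cat_take_drop; case: r {pr i E1b E2b E1a}.
Qed.

Lemma kQmul_trivial_r f y r : kQmul o f (kQpath K (y, [::])) r =
  if is_path o r then f r * (ptgt o r == y)%:R else 0.
Proof.
rewrite /kQmul; case: ifP => // pr.
rewrite big_ord_recr /= big1 ?add0r.
  by rewrite take_size drop_size /kQpath xpair_eqE eqxx andbT; case: r pr.
move=> i _; rewrite /kQpath xpair_eqE.
have : drop i r.2 != [::] by rewrite -size_eq0 size_drop subn_eq0 -ltnNge.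
by move/negbTE => ->; rewrite andbF mulr0.
Qed.

Lemma kQmul_trivial_l x g r : kQmul o (kQpath K (x, [::])) g r =
  if is_path o r then (psrc r == x)%:R * g r else 0.
Proof.
rewrite /kQmul; case: ifP => // pr.
rewrite big_ord_recl /= big1 ?addr0.
  by rewrite take0 drop0 /kQpath xpair_eqE eqxx andbT; case: r pr.
move=> i _; rewrite /kQpath xpair_eqE.
have : take (bump 0 i) r.2 != [::].
  by rewrite -size_eq0 size_takel // (leq_trans _ (ltn_ord i)).
by move/negbTE => ->; rewrite andbF mul0r.
Qed.

(* [corner x y f] is [e_x f e_y]: the part of [f] on paths from [x] to [y]. *)
Definition corner x y f : rpath N -> K :=
  fun r => if (psrc r == x) && (ptgt o r == y) then f r else 0.

Section TwoPaths.
Variables (w v : rpath N).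
Hypothesis w_neq_v : w != v.

Definition lc2 (c d : K) : rpath N -> K :=
  kQadd (kQscale c (kQpath K w)) (kQscale d (kQpath K v)).

Lemma lc2E c d r : lc2 c d r = if r == w then c else if r == v then d else 0.
Proof.
rewrite /lc2 /kQadd /kQscale /kQpath.
have [->|rw] := eqVneq r w; first by rewrite (negbTE w_neq_v) mulr1 mulr0 addr0.
by case: eqP; rewrite !mulr0 ?mulr1 ?add0r.
Qed.

Lemma lc2_supported f : (forall r, r != w -> r != v -> f r = 0) -> f = lc2 (f w) (f v).
Proof.
move=> f0; apply: functional_extensionality => r; rewrite lc2E.
have [->|rw] := eqVneq r w => //; have [->|rv] := eqVneq r v => //; exact: f0.
Qed.

Lemma lc2_inj c d c' d' : lc2 c d = lc2 c' d' -> c = c' /\ d = d'.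
Proof.
move=> E; have := congr1 (fun F => F w) E; have := congr1 (fun F => F v) E.
by rewrite !lc2E eqxx eq_sym (negbTE w_neq_v) eqxx.
Qed.

End TwoPaths.

Lemma kQpath_lc2 w v : kQpath K w = lc2 w v 1 0 /\ kQpath K v = lc2 w v 0 1.
Proof.
by split; apply: functional_extensionality => r;
  rewrite /lc2 /kQadd /kQscale /kQpath ?mul1r ?mul0r ?addr0 ?add0r.
Qed.

Lemma lc2_comb w v k k' c d c' d' :
  kQadd (kQscale k (lc2 w v c d)) (kQscale k' (lc2 w v c' d')) =
  lc2 w v (k * c + k' * c') (k * d + k' * d').
Proof.
apply: functional_extensionality => r; rewrite /lc2 /kQadd /kQscale.
by rewrite !mulrDr !mulrDl !mulrA addrACA.
Qed.

Lemma binomial_lc2 w v a :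
  kQadd (kQpath K w) (kQscale a (kQpath K v)) = lc2 w v 1 a.
Proof. by apply: functional_extensionality => r; rewrite /lc2 /kQadd /kQscale mul1r. Qed.

Lemma kQscale_lc2 w v k c d : kQscale k (lc2 w v c d) = lc2 w v (k * c) (k * d).
Proof.
apply: functional_extensionality => r; rewrite /lc2 /kQadd /kQscale.
by rewrite mulrDr !mulrA.
Qed.

Section Ideal.
Variable I : (rpath N -> K) -> Prop.
Hypothesis HI : is_ideal o I.

Lemma ideal_in_kQ f : I f -> in_kQ o f.
Proof. by case: HI => H _ _ _ _; apply: H. Qed.

Lemma ideal_is_path f p : I f -> f p != 0 -> is_path o p.
Proof. by move=> /ideal_in_kQ [_]; apply. Qed.

Lemma ideal0 : I (@kQzero N K).
Proof. by case: HI. Qed.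

Lemma ideal_comb k k' f g : I f -> I g -> I (kQadd (kQscale k f) (kQscale k' g)).
Proof. by case: HI => _ _ HD HZ _ If Ig; apply: HD; apply: HZ. Qed.

Lemma idealZ k f : I f -> I (kQscale k f).
Proof. by case: HI => _ _ _ HZ _; apply: HZ. Qed.

Lemma ideal_mull g f : in_kQ o g -> I f -> I (kQmul o g f).
Proof. by case: HI => _ _ _ _ HM hg hf; case: (HM f g hg hf). Qed.

Lemma ideal_mulr g f : in_kQ o g -> I f -> I (kQmul o f g).
Proof. by case: HI => _ _ _ _ HM hg hf; case: (HM f g hg hf). Qed.

Lemma ideal_ext f g : I f -> (forall r, f r = g r) -> I g.
Proof. by move=> If /functional_extensionality <-. Qed.

Lemma ideal_corner f x y : I f -> I (corner x y f).
Proof.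
move=> If; have Iy := ideal_mulr (in_kQ_path (isT : is_path o (y, [::]))) If.
apply: (ideal_ext (ideal_mull (in_kQ_path (isT : is_path o (x, [::]))) Iy)) => r.
rewrite kQmul_trivial_l kQmul_trivial_r /corner.
case: ifP => pr; first by rewrite pr; do 2!case: eqP; rewrite ?mul1r ?mulr1 ?mul0r ?mulr0.
case: ifP => // _; apply/esym/eqP; apply: contraFT pr; exact: ideal_is_path If.
Qed.

Lemma ideal_leJ r t : is_path o r -> leJ o r t -> I (kQpath K r) -> I (kQpath K t).
Proof.
move=> pr [al [be [pa pb e1 e2 ->]]] Ir.
have pra : is_path o (pcat al r).
  by move: pa pr e1; rewrite /is_path /ptgt /psrc /= validp_cat => -> /= + ->.
have e3 : ptgt o (pcat al r) = psrc be by rewrite -e2 /ptgt /= endp_cat; congr endp.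
rewrite -kQmul_path //; apply: ideal_mulr; first exact: in_kQ_path.
by rewrite -kQmul_path //; apply: ideal_mull => //; exact: in_kQ_path.
Qed.

Lemma ideal_of_support (s : seq (rpath N)) f : (forall p, p \notin s -> f p = 0) ->
  (forall p, f p != 0 -> I (kQpath K p)) -> I f.
Proof.
elim: s f => [|p s IH] f f0 fI; first by apply: (ideal_ext ideal0) => r; rewrite f0.
pose f' r := if r == p then 0 else f r.
have If' : I f'.
  apply: IH => q; rewrite /f'; have [_|qp] := eqVneq q p; rewrite ?eqxx //.
  - by move=> qs; apply: f0; rewrite in_cons negb_or qp.
  - exact: fI.
have [fp0|fp] := eqVneq (f p) 0.
  by apply: (ideal_ext If') => r; rewrite /f'; have [->|] := eqVneq r p.
apply: (ideal_ext (ideal_comb 1 (f p) If' (fI p fp))) => r.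
rewrite /kQadd /kQscale /f' /kQpath; have [->|_] := eqVneq r p.
  by rewrite mul1r mulr1 add0r.
by rewrite mul1r mulr0 addr0.
Qed.

(* Cutting [f] down to the corner of [p] isolates [p] when no other path
   parallel to [p] occurs in [f]. *)
Lemma ideal_path_or_parallel f p : I f -> f p != 0 ->
  I (kQpath K p) \/
  exists r, [/\ p != r, psrc p = psrc r, ptgt o p = ptgt o r & f r != 0].
Proof.
move=> If fp; case: (classic (exists r, [/\ p != r, psrc p = psrc r,
  ptgt o p = ptgt o r & f r != 0])) => [|nex]; [by right | left].
apply: (ideal_ext (idealZ (f p)^-1 (ideal_corner (psrc p) (ptgt o p) If))) => r.
rewrite /kQscale /kQpath /corner; have [->|rp] := eqVneq r p; first by rewrite !eqxx mulVf.
case: ifP => [/andP [/eqP sr /eqP tr]|]; last by rewrite mulr0.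
have [->|fr] := eqVneq (f r) 0; first by rewrite mulr0.
by case: nex; exists r; rewrite eq_sym.
Qed.

End Ideal.
End PathAlgebra.

Section Dichotomy.
Local Open Scope ring_scope.
Variable n : nat.
Local Notation N := n.+1.
Variables (o : 'I_N -> bool) (K : fieldType) (I : (rpath N -> K) -> Prop).
Hypotheses (acyc : acyclic o) (HI : is_ideal o I).
Implicit Types (p q r t : rpath N) (f g : rpath N -> K).

Definition support_closed := forall f p, I f -> f p != 0 -> I (kQpath K p).

Definition binomial_ideal := exists (w v : rpath N) (a : K),
  [/\ maximal_path o w, maximal_path o v, w <> v, a != 0 &
   forall f, I f <-> exists c : K,
     f = kQscale c (kQadd (kQpath K w) (kQscale a (kQpath K v)))].

Lemma lc2_span w v c d c' d' e e' : I (lc2 w v c d) -> I (lc2 w v c' d') ->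
  c * d' != c' * d -> I (lc2 w v e e').
Proof.
move=> Icd Icd' det; rewrite -subr_eq0 in det.
pose k := (e * d' - e' * c') / (c * d' - c' * d).
pose k' := (e' * c - e * d) / (c * d' - c' * d).
suff [-> ->] : e = k * c + k' * c' /\ e' = k * d + k' * d'.
  by rewrite -lc2_comb; exact: (ideal_comb HI k k' Icd Icd').
by split; rewrite /k /k'; field.
Qed.

Lemma linearized_of_support_closed : support_closed -> linearized_semigroup_ideal o I.
Proof.
move=> Hsc; exists (fun p => I (kQpath K p)); split.
  split=> [p Ip|al w be pa pw pb e1 e2 Iw]; last by apply: (ideal_leJ HI pw _ Iw); exists al, be.
  by apply: (ideal_is_path HI Ip); rewrite /kQpath eqxx oner_eq0.
move=> f; split => [If|[[[s f0] _] fI]]; last exact: (ideal_of_support HI f0 fI).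
by split; [exact: (ideal_in_kQ HI If) | move=> p; exact: (Hsc f p If)].
Qed.

Section Arcs.
Variables (x : 'I_N) (m : nat).
Hypotheses (m_gt0 : (0 < m)%N) (m_ltN : (m < N)%N) (bip : bipolar o x m).
Local Notation W := (omega x m).
Local Notation V := (upsilon x m).

Lemma ideal_corner_arcs f : I f -> I (lc2 W V (f W) (f V)).
Proof.
move=> If; have [_ tW] := omega_path m_gt0 m_ltN bip.
have [_ tV] := upsilon_path m_gt0 m_ltN bip.
have -> : lc2 W V (f W) (f V) = corner o x (shift x m) f.
  rewrite [RHS](lc2_supported (omega_neq_upsilon m_gt0 m_ltN bip)) => [|t tW' tV'].
    by rewrite /corner /= tW tV !eqxx.
  rewrite /corner; case: ifP => // /andP [/eqP st /eqP tt]; apply/eqP; apply: contraT => ft.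
  by case: (paths_source_sink m_gt0 m_ltN bip acyc (ideal_is_path HI If ft) st tt) => e;
    [move: tW' | move: tV']; rewrite e eqxx.
exact: ideal_corner.
Qed.

Lemma ideal_supported_arcs g : ~ I (kQpath K W) -> ~ I (kQpath K V) -> I g ->
  g = lc2 W V (g W) (g V).
Proof.
move=> nW nV Ig; apply: (lc2_supported (omega_neq_upsilon m_gt0 m_ltN bip)) => t tW tV.
apply/eqP; apply: contraT => gt; have pt := ideal_is_path HI Ig gt.
have [It|[t' [tt' st tt gt']]] := ideal_path_or_parallel HI Ig gt.
  exfalso; case: (leJ_omega_upsilon m_gt0 m_ltN bip pt) => L; [apply: nW | apply: nV];
    exact: (ideal_leJ HI pt L It).
by case: (parallel_bipolar m_gt0 m_ltN bip acyc pt (ideal_is_path HI Ig gt') tt' st tt) => e;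
  [move: tW | move: tV]; rewrite e eqxx.
Qed.

Lemma binomial_of_arcs b c : I (lc2 W V b c) -> b != 0 -> c != 0 ->
  ~ (I (kQpath K W) /\ I (kQpath K V)) -> binomial_ideal.
Proof.
move=> Ibc b0 c0 nWV; have WV := omega_neq_upsilon m_gt0 m_ltN bip.
have [EW EV] := kQpath_lc2 K W V.
have dep b' c' : I (lc2 W V b' c') -> b' * c = b * c'.
  move=> Ibc'; apply: NNPP => /eqP det; apply: nWV; rewrite EW EV.
  by split; apply: lc2_span Ibc' Ibc det.
have nW : ~ I (kQpath K W) by rewrite EW => /dep /eqP; rewrite mul1r mulr0 (negbTE c0).
have nV : ~ I (kQpath K V) by rewrite EV => /dep /eqP; rewrite mul0r mulr1 eq_sym (negbTE b0).
have [pW tW] := omega_path m_gt0 m_ltN bip; have [pV tV] := upsilon_path m_gt0 m_ltN bip.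
exists W, V, (c / b); split.
- exact: maximal_source_sink m_gt0 m_ltN bip W pW erefl tW.
- exact: maximal_source_sink m_gt0 m_ltN bip V pV erefl tV.
- exact/eqP.
- by rewrite mulf_neq0 ?invr_neq0.
move=> g; rewrite binomial_lc2; split=> [Ig|[k ->]].
  have Eg := ideal_supported_arcs nW nV Ig; rewrite Eg in Ig.
  exists (g W); rewrite {1}Eg kQscale_lc2 mulr1 mulrA (dep _ _ Ig).
  by rewrite mulrAC divff ?mul1r.
have -> : lc2 W V 1 (c / b) = kQscale b^-1 (lc2 W V b c).
  by rewrite kQscale_lc2 mulVf // mulrC.
exact: (idealZ HI k (idealZ HI _ Ibc)).
Qed.

End Arcs.

Lemma binomial_of_not_support_closed : ~ support_closed ->
  num_sources o = 1%N /\ binomial_ideal.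
Proof.
move=> Hnsc.
have [f [p [If fp nIp]]] : exists f p, [/\ I f, f p != 0 & ~ I (kQpath K p)].
  by apply: NNPP => H; apply: Hnsc => f p If fp; apply: NNPP => nIp; apply: H; exists f, p.
have [//|[r [pr sr tr fr]]] := ideal_path_or_parallel HI If fp.
have [m [m_gt0 m_ltN bip] Hpr] :=
  parallel_paths acyc (ideal_is_path HI If fp) (ideal_is_path HI If fr) pr sr tr.
split; first exact: num_sources_bipolar m_gt0 m_ltN bip.
have [fW fV] : f (omega (psrc p) m) != 0 /\ f (upsilon (psrc p) m) != 0.
  by case: Hpr => -[<- <-].
apply: (binomial_of_arcs m_gt0 m_ltN bip (ideal_corner_arcs m_gt0 m_ltN bip If) fW fV).
by case=> IW IV; apply: nIp; case: Hpr => -[-> _].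
Qed.

Lemma not_linearized_binomial : linearized_semigroup_ideal o I -> ~ binomial_ideal.
Proof.
move=> [X [_ HX]] [w [v [a [[pw _] _ /eqP wv a0 HB]]]].
rewrite binomial_lc2 in HB.
have Ih : I (lc2 w v 1 a) by apply/HB; exists 1; rewrite kQscale_lc2 !mul1r.
have Iw : I (kQpath K w).
  apply/HX; split=> [|p]; first exact: in_kQ_path.
  rewrite /kQpath; have [-> _|_] := eqVneq p w; last by rewrite eqxx.
  by apply: (proj1 (HX _) Ih).2; rewrite lc2E // eqxx oner_eq0.
have [c] := (HB _).1 Iw; rewrite (kQpath_lc2 K w v).1 kQscale_lc2 mulr1.
by case/(lc2_inj wv) => <-; rewrite mul1r => /esym/eqP; rewrite (negbTE a0).
Qed.

End Dichotomy.

Local Open Scope ring_scope.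

Theorem proposition6 (K : closedFieldType) (n : nat) (o : 'I_n -> bool)
  (Hacyc : acyclic o) (Hsrc : exists x : 'I_n, is_source o x)
  (I : (rpath n -> K) -> Prop) (HI : is_ideal o I) :
  let A := linearized_semigroup_ideal o I in
  let B := num_sources o = 1%N /\
    exists (w v : rpath n) (a : K),
      [/\ maximal_path o w, maximal_path o v, w <> v, a != 0 &
        forall f, I f <->
          exists c : K, f = kQscale c (kQadd (kQpath K w) (kQscale a (kQpath K v)))] in
  (A \/ B) /\ ~ (A /\ B).
Proof.
case: n o Hacyc Hsrc I HI => [|n] o Hacyc Hsrc I HI; first by case: Hsrc => -[].
move=> A B; split; last by case=> hA [_ hB]; exact: not_linearized_binomial hA hB.
have [Hsc|Hnsc] := classic (support_closed I).
- by left; exact: linearized_of_support_closed.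
- by right; exact: binomial_of_not_support_closed.
Qed.
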